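(* Let $Q=\partial_\psi S$ and $R=\partial_\psi P_0$ be $\partial_\psi$-delta operators with $S,P_0\in\Sigma_\psi$ invertible, and let $(p_n)$ and $(r_n)$ be their respective $\partial_\psi$-basic polynomial sequences. Then for every $n>0$, $$p_n(x)=\hat x_\psi\,(P_0S^{-1})^n\,\hat x_\psi^{-1}\,r_n(x).$$
   Context: Let $F$ be a field of characteristic $0$, $P=F[x]$. Fix $(\psi_n)_{n\ge0}$ in $F$ with $\psi_0=1$, $\psi_n\ne0$, $\psi_{-1}=0$; $n_\psi=\psi_{n-1}/\psi_n$, $n_\psi!=1/\psi_n$, $0_\psi!=1$. $\partial_\psi x^n=n_\psi x^{n-1}$ (linear); $E^a(\partial_\psi)=\sum_k\frac{a^k}{k_\psi!}\partial_\psi^k$. $\Sigma_\psi$: algebra of linear operators on $P$ commuting with all $E^a(\partial_\psi)$. A $\partial_\psi$-delta operator is $Q\in\Sigma_\psi$ with $Q(x)$ a nonzero constant; its $\partial_\psi$-basic sequence: $\deg p_n=n$, $p_0=1$, $p_n(0)=0$ for $n>0$, $Qp_n=n_\psi p_{n-1}$. $\hat x_\psi x^n=\frac{n+1}{(n+1)_\psi}x^{n+1}$ (linear), and $\hat x_\psi^{-1}$ is its inverse on polynomials with zero constant term: $\hat x_\psi^{-1}x^n=\frac{n_\psi}{n}x^{n-1}$ for $n\ge1$. *)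

From HB Require Import structures.
From mathcomp Require Import all_boot all_order all_algebra.
Set Implicit Arguments. Unset Strict Implicit. Unset Printing Implicit Defensive.
Import Order.TTheory GRing.Theory Num.Theory.
Local Open Scope ring_scope.

Section PsiCalculus.
Variable F : fieldType.
Variable psi : nat -> F.

(* n_psi = psi_{n-1} / psi_n, with psi_{-1} = 0, so 0_psi = 0 *)
Definition nq (n : nat) : F := match n with 0 => 0 | m.+1 => psi m / psi m.+1 end.

Definition qfact (n : nat) : F := (psi n)^-1.

(* partial_psi x^n = n_psi x^{n-1}, extended linearly *)
Definition dpsi (p : {poly F}) : {poly F} :=
  \poly_(i < size p) (p`_i.+1 * nq i.+1).

(* E^a(partial_psi) = sum_k a^k / k_psi! partial_psi^k ; on a polynomial p
   all terms with k >= size p vanish, so the sum is finite *)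
Definition Epsi (a : F) (p : {poly F}) : {poly F} :=
  \sum_(k < size p) (a ^+ k / qfact k) *: iter k dpsi p.

Definition islinear (T : {poly F} -> {poly F}) : Prop :=
  forall (a : F) (p q : {poly F}), T (a *: p + q) = a *: T p + T q.

Definition in_Sigma (T : {poly F} -> {poly F}) : Prop :=
  islinear T /\ forall (a : F) (p : {poly F}), T (Epsi a p) = Epsi a (T p).

Definition delta_op (Q : {poly F} -> {poly F}) : Prop :=
  in_Sigma Q /\ exists c : F, c != 0 /\ Q 'X = c%:P.

Definition basic_seq (Q : {poly F} -> {poly F}) (p : nat -> {poly F}) : Prop :=
  [/\ forall n, size (p n) = n.+1,
      p 0%N = 1,
      forall n, (0 < n)%N -> (p n).[0] = 0,
      Q (p 0%N) = 0 (* = 0_psi p_{-1} *) &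
      forall n, Q (p n.+1) = nq n.+1 *: p n].

(* hat x_psi x^n = (n+1)/(n+1)_psi x^{n+1} *)
Definition xhat (p : {poly F}) : {poly F} :=
  \poly_(i < (size p).+1)
    (match i with 0 => 0 | j.+1 => p`_j * (j.+1%:R / nq j.+1) end).

(* hat x_psi^{-1} x^n = n_psi / n x^{n-1} for n >= 1
   (the inverse of xhat on polynomials with zero constant term;
    the constant term is discarded) *)
Definition xhatinv (p : {poly F}) : {poly F} :=
  \poly_(i < size p) (p`_i.+1 * (nq i.+1 / i.+1%:R)).

End PsiCalculus.

From HB Require Import structures.
From mathcomp Require Import all_boot all_order all_algebra.
Set Implicit Arguments. Unset Strict Implicit. Unset Printing Implicit Defensive.
Import Order.TTheory GRing.Theory Num.Theory.
Local Open Scope ring_scope.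

(* Every operator A of Sigma_psi commutes with D = partial_psi (compare the
   coefficients of a in A E^a = E^a A), hence is a power series in D, so all
   such operators commute with each other.  With X = hat x_psi one has
   D X - X D = 1, so the Pincherle derivative S' = S X - X S again commutes
   with D, and X S^-n = S^-n X + n S' S^-(n+1).  The sequence
   S^-n (1 + S' S^-1 D) x^n satisfies the recursion defining the basic sequence
   of D S, whose kernel consists of the constants; this gives the transfer
   formula p_n = X S^-n X^-1 x^n for n > 0.  Applied to S and to P0, the factor
   P0^-n in X^-1 r_n cancels against (P0 S^-1)^n. *)

Lemma iter_commute (T : Type) (f g : T -> T) :
  (forall x, f (g x) = g (f x)) -> forall n x, f (iter n g x) = iter n g (f x).
Proof. by move=> fg; elim=> //= n IH x; rewrite fg IH. Qed.

Lemma iter_comp_cancel (T : Type) (f g h : T -> T) :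
  cancel h f -> (forall x, h (g x) = g (h x)) ->
  forall n x, iter n (fun y => f (g y)) (iter n h x) = iter n g x.
Proof.
move=> hK hg; elim=> // n IH x.
by rewrite [iter n.+1 h x]iterSr iterS IH -iterS -(iter_commute hg) hK.
Qed.

Section LinearOperators.
Variables (F : fieldType) (A : {poly F} -> {poly F}).
Hypothesis A_lin : islinear A.

Let Al : {linear {poly F} -> {poly F}} :=
  HB.pack A (GRing.isLinear.Build F {poly F} {poly F} *:%R A A_lin).

Lemma islinear0 : A 0 = 0. Proof. exact: linear0 Al. Qed.

Lemma islinearD p q : A (p + q) = A p + A q. Proof. exact: (linearD Al p q). Qed.

Lemma islinearZ a p : A (a *: p) = a *: A p. Proof. exact: (linearZ_LR Al a p). Qed.

Lemma islinearB p q : A (p - q) = A p - A q. Proof. exact: (linearB Al p q). Qed.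

Lemma islinear_sum (I : Type) (r : seq I) (P : pred I) (f : I -> {poly F}) :
  A (\sum_(i <- r | P i) f i) = \sum_(i <- r | P i) A (f i).
Proof. exact: (linear_sum Al). Qed.

Lemma islinear_iter n : islinear (iter n A).
Proof. by elim: n => [|n IH] a p q //=; rewrite IH A_lin. Qed.

End LinearOperators.

Section PsiOperators.
Variable F : fieldType.
Hypothesis charF : [pchar F] =i pred0.
Variable psi : nat -> F.
Hypothesis psi0 : psi 0%N = 1.
Hypothesis psi_nz : forall n, psi n != 0.

Local Notation D := (dpsi psi).
Local Notation X := (xhat psi).
Local Notation Xi := (xhatinv psi).

Implicit Types (p q : {poly F}) (A B : {poly F} -> {poly F}).

Lemma natf_neq0 n : (0 < n)%N -> n%:R != 0 :> F.
Proof. by rewrite (proj1 (pcharf0P _) charF) -lt0n. Qed.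

Lemma natf_inj : injective (fun n : nat => n%:R : F).
Proof.
move=> m n /= mn; wlog le_mn : m n mn / (m <= n)%N.
  by move=> W; case/orP: (leq_total m n) => ?; [|symmetry]; apply: W.
apply/eqP; rewrite eqn_leq le_mn -subn_eq0 /= -(proj1 (pcharf0P _) charF).
by rewrite natrB // mn subrr.
Qed.

Lemma nq_neq0 n : nq psi n.+1 != 0.
Proof. by rewrite mulf_neq0 ?invr_eq0. Qed.

Lemma coef_dpsi p i : (D p)`_i = p`_i.+1 * nq psi i.+1.
Proof.
rewrite coef_poly; case: ltnP => // le_p_i.
by rewrite nth_default ?mul0r // (leq_trans le_p_i).
Qed.

Lemma coef0_xhat p : (X p)`_0 = 0.
Proof. by rewrite coef_poly. Qed.

Lemma coef_xhatS p i : (X p)`_i.+1 = p`_i * (i.+1%:R / nq psi i.+1).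
Proof. by rewrite coef_poly ltnS; case: ltnP => // ?; rewrite nth_default ?mul0r. Qed.

Lemma coef_xhatinv p i : (Xi p)`_i = p`_i.+1 * (nq psi i.+1 / i.+1%:R).
Proof.
rewrite coef_poly; case: ltnP => // le_p_i.
by rewrite nth_default ?mul0r // (leq_trans le_p_i).
Qed.

Lemma dpsi_is_linear : linear D.
Proof. by move=> a p q; apply/polyP=> i; rewrite !(coefD, coefZ, coef_dpsi) mulrDl mulrA. Qed.

HB.instance Definition _ :=
  GRing.isLinear.Build F {poly F} {poly F} *:%R D dpsi_is_linear.

Lemma xhat_is_linear : linear X.
Proof.
move=> a p q; apply/polyP=> [[|i]]; first by rewrite coefD coefZ !coef0_xhat mulr0 addr0.
by rewrite !(coefD, coefZ, coef_xhatS) mulrDl mulrA.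
Qed.

HB.instance Definition _ :=
  GRing.isLinear.Build F {poly F} {poly F} *:%R X xhat_is_linear.

Lemma dpsiXn n : D 'X^(n.+1) = nq psi n.+1 *: 'X^n.
Proof.
apply/polyP=> i; rewrite coef_dpsi coefZ !coefXn eqSS.
by case: eqP => [->|]; rewrite ?mulr1 ?mul1r ?mulr0 ?mul0r.
Qed.

Lemma dpsiC c : D c%:P = 0.
Proof. by apply/polyP=> i; rewrite coef_dpsi coefC coef0 mul0r. Qed.

Lemma xhatinvXn n : Xi 'X^(n.+1) = (nq psi n.+1 / n.+1%:R) *: 'X^n.
Proof.
apply/polyP=> i; rewrite coef_xhatinv coefZ !coefXn eqSS.
by case: eqP => [->|]; rewrite ?mulr1 ?mul1r ?mulr0 ?mul0r.
Qed.

Lemma xhatK : cancel X Xi.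
Proof.
move=> p; apply/polyP=> i; rewrite coef_xhatinv coef_xhatS -mulrA -[RHS]mulr1.
by congr (_ * _); rewrite mulrA divfK ?nq_neq0 // mulfV ?natf_neq0.
Qed.

Lemma xhatinvK (p : {poly F}) : p`_0 = 0 -> X (Xi p) = p.
Proof.
move=> p0; apply/polyP=> [[|i]]; first by rewrite coef0_xhat p0.
rewrite coef_xhatS coef_xhatinv -mulrA -[RHS]mulr1.
by congr (_ * _); rewrite mulrA divfK ?mulfV ?nq_neq0 ?natf_neq0.
Qed.

Lemma dpsi_xhat p : D (X p) = p + X (D p).
Proof.
apply/polyP=> [[|i]].
  by rewrite coefD coef_dpsi coef_xhatS coef0_xhat addr0 -mulrA divfK ?nq_neq0 ?mulr1.
rewrite coefD coef_dpsi !coef_xhatS coef_dpsi -mulrA divfK ?nq_neq0 //.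
rewrite -[i.+2]addn1 natrD mulrDr mulr1 addrC; congr (_ + _).
by rewrite -mulrA [nq psi i.+1 * _]mulrC divfK ?nq_neq0.
Qed.

Lemma dpsi_eq0 p : D p = 0 -> p = (p`_0)%:P.
Proof.
move=> Dp0; apply/polyP=> [[|i]]; rewrite coefC //=.
have /eqP := congr1 (coefp i) Dp0.
by rewrite /= coef_dpsi coef0 mulf_eq0 (negbTE (nq_neq0 _)) orbF => /eqP.
Qed.

Lemma size_dpsi p : (size (D p) <= (size p).-1)%N.
Proof.
by apply/leq_sizeP=> j le_j; rewrite coef_dpsi nth_default ?mul0r //; case: (size p) le_j.
Qed.

Lemma iter_dpsi_eq0 p k : (size p <= k)%N -> iter k D p = 0.
Proof.
elim: k p => [|k IH] p le_p_k; first by apply/eqP; rewrite -size_poly_eq0 -leqn0.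
by rewrite iterSr IH // (leq_trans (size_dpsi p)) // -ltnS; case: (size p) le_p_k.
Qed.

Definition commute_dpsi (A : {poly F} -> {poly F}) :=
  islinear A /\ forall p, A (D p) = D (A p).

Lemma commute_dpsi_comp A B :
  commute_dpsi A -> commute_dpsi B -> commute_dpsi (fun q => A (B q)).
Proof.
move=> [A_lin AD] [B_lin BD]; split=> [a p q|p]; first by rewrite B_lin A_lin.
by rewrite BD AD.
Qed.

Lemma commute_dpsi_iter A n : commute_dpsi A -> commute_dpsi (iter n A).
Proof.
move=> [A_lin AD]; split=> [|p]; first exact: islinear_iter.
by rewrite (iter_commute (fun q => esym (AD q))).
Qed.

Lemma commute_dpsi_inv A Ainv :
  commute_dpsi A -> cancel A Ainv -> cancel Ainv A -> commute_dpsi Ainv.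
Proof.
move=> [A_lin AD] AK AinvK; split=> [a p q|p].
  by rewrite -{1}(AinvK p) -{1}(AinvK q) -A_lin AK.
by rewrite -{1}(AinvK p) -AD AK.
Qed.

Lemma Epsi_sum a q N : (size q <= N)%N ->
  Epsi psi a q = \sum_(k < N) (a ^+ k * psi k) *: iter k D q.
Proof.
move=> le_q_N; rewrite /Epsi -(subnKC le_q_N) big_split_ord /=.
rewrite [X in _ = _ + X]big1 ?addr0 => [|k _]; last by rewrite iter_dpsi_eq0 ?scaler0 ?leq_addr.
by apply: eq_bigr => k _; rewrite /qfact invrK.
Qed.

Lemma sum_scale_powers_eq0 N (v : nat -> {poly F}) :
  (forall a : F, \sum_(k < N) a ^+ k *: v k = 0) -> forall k, (k < N)%N -> v k = 0.
Proof.
move=> v0 k lt_k_N; apply/polyP=> i; rewrite coef0.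
pose P := \poly_(j < N) (v j)`_i.
have P0 : P = 0.
  apply: (@roots_geq_poly_eq0 _ _ [seq m%:R | m <- iota 0 N]).
  - apply/allP=> _ /mapP [m _ ->]; rewrite /root horner_poly.
    apply/eqP; transitivity ((\sum_(k < N) m%:R ^+ k *: v k)`_i); last by rewrite v0 coef0.
    by rewrite coef_sum; apply: eq_bigr => j _; rewrite coefZ mulrC.
  - by rewrite (map_inj_uniq natf_inj) iota_uniq.
  - by rewrite size_map size_iota size_poly.
by have := congr1 (coefp k) P0; rewrite /= coef_poly lt_k_N coef0.
Qed.

(* [A E^a q = E^a A q] is a polynomial identity in [a]; its coefficient of [a^1]
   is [psi 1 *: (A (D q) - D (A q))]. *)
Lemma Sigma_commute_dpsi A : in_Sigma psi A -> commute_dpsi A.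
Proof.
move=> [A_lin AE]; split=> // p.
set N := (maxn (size p) (size (A p))).+2.
have le_p_N : (size p <= N)%N by rewrite leqW ?leqW ?leq_maxl.
have le_Ap_N : (size (A p) <= N)%N by rewrite leqW ?leqW ?leq_maxr.
pose v k := psi k *: (A (iter k D p) - iter k D (A p)).
have v0 a : \sum_(k < N) a ^+ k *: v k = 0.
  transitivity (A (Epsi psi a p) - Epsi psi a (A p)); last by rewrite AE subrr.
  rewrite (Epsi_sum _ le_p_N) (Epsi_sum _ le_Ap_N) (islinear_sum A_lin) -sumrB.
  by apply: eq_bigr => k _; rewrite (islinearZ A_lin) -scalerBr scalerA.
have /eqP := sum_scale_powers_eq0 v0 (isT : (1 < N)%N).
by rewrite scaler_eq0 (negbTE (psi_nz 1)) subr_eq0 => /eqP.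
Qed.

(* [xpsi n] is the psi-monomial [x^n / n_psi!], the basic sequence of [D]. *)
Definition xpsi n : {poly F} := psi n *: 'X^n.

Lemma dpsi_xpsi0 : D (xpsi 0) = 0.
Proof. by rewrite /xpsi linearZ /= expr0 -polyC1 dpsiC scaler0. Qed.

Lemma dpsi_xpsiS n : D (xpsi n.+1) = xpsi n.
Proof. by rewrite /xpsi linearZ /= dpsiXn scalerA mulrC divfK. Qed.

Lemma iter_dpsi_xpsi j n : iter j D (xpsi n) = if (j <= n)%N then xpsi (n - j) else 0.
Proof.
elim: j n => [|j IH] [|n]; rewrite ?subn0 // iterSr.
  by rewrite dpsi_xpsi0 iter_dpsi_eq0 ?size_poly0.
by rewrite dpsi_xpsiS IH.
Qed.

Lemma coef0_iter_dpsi_xpsi j n : (iter j D (xpsi n))`_0 = (j == n)%:R.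
Proof.
rewrite iter_dpsi_xpsi; case: leqP => [le_j_n|lt_n_j]; last by rewrite coef0 gtn_eqF.
have -> : (j == n) = (n - j == 0)%N by rewrite subn_eq0 eqn_leq le_j_n.
rewrite coefZ coefXn.
by case: (n - j)%N => [|k]; rewrite ?psi0 ?mulr1 ?mulr0.
Qed.

Lemma poly_xpsi_expand q : q = \sum_(i < size q) (q`_i / psi i) *: xpsi i.
Proof.
rewrite -{1}[q]coefK poly_def; apply: eq_bigr => i _.
by rewrite /xpsi scalerA divfK.
Qed.

Lemma commute_dpsi_id : commute_dpsi id.
Proof. by []. Qed.

Lemma commute_dpsi_dpsi : commute_dpsi D.
Proof. by split; first exact: dpsi_is_linear. Qed.

Lemma commute_dpsi_add A B :
  commute_dpsi A -> commute_dpsi B -> commute_dpsi (fun q => A q + B q).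
Proof.
move=> [A_lin AD] [B_lin BD]; split=> [a p q|p]; last by rewrite AD BD linearD.
by rewrite A_lin B_lin scalerDr addrACA.
Qed.

Lemma commute_dpsi_sub A B :
  commute_dpsi A -> commute_dpsi B -> commute_dpsi (fun q => A q - B q).
Proof.
move=> [A_lin AD] [B_lin BD]; split=> [a p q|p]; last by rewrite AD BD linearB.
by rewrite A_lin B_lin scalerBr addrACA opprD.
Qed.

(* [D] maps [A (xpsi n.+1)] to [A (xpsi n)], and the kernel of [D] is the constants. *)
Lemma commute_dpsi_xpsi_eq0 A n : commute_dpsi A ->
  (forall k, (k <= n)%N -> (A (xpsi k))`_0 = 0) -> A (xpsi n) = 0.
Proof.
move=> [A_lin AD]; elim: n => [|n IH] A0.
  have DA0 : D (A (xpsi 0)) = 0 by rewrite -AD dpsi_xpsi0 islinear0.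
  by rewrite (dpsi_eq0 DA0) A0.
have DA0 : D (A (xpsi n.+1)) = 0.
  by rewrite -AD dpsi_xpsiS IH // => k le_k_n; rewrite A0 // leqW.
by rewrite (dpsi_eq0 DA0) A0.
Qed.

Section Expansion.
Variables (A : {poly F} -> {poly F}) (N : nat).
Hypothesis A_comm : commute_dpsi A.

Let dpsi_series r := \sum_(j < N) (A (xpsi j))`_0 *: iter j D r.

Let dpsi_series_comm : commute_dpsi dpsi_series.
Proof.
split=> [a p q|p].
  rewrite scaler_sumr -big_split; apply: eq_bigr => j _ /=.
  by rewrite (islinear_iter dpsi_is_linear) scalerDr !scalerA mulrC.
by rewrite linear_sum; apply: eq_bigr => j _; rewrite linearZ -iterS iterSr.
Qed.

Let coef0_dpsi_series n : (n < N)%N -> (dpsi_series (xpsi n))`_0 = (A (xpsi n))`_0.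
Proof.
move=> lt_n_N; rewrite coef_sum (bigD1 (Ordinal lt_n_N)) //=.
rewrite coefZ coef0_iter_dpsi_xpsi eqxx mulr1 big1 ?addr0 // => j ne_j_n.
by rewrite coefZ coef0_iter_dpsi_xpsi -val_eqE /= in ne_j_n *; rewrite (negbTE ne_j_n) mulr0.
Qed.

Lemma commute_dpsi_expand q : (size q <= N)%N ->
  A q = \sum_(j < N) (A (xpsi j))`_0 *: iter j D q.
Proof.
move=> le_q_N; have A_xpsi n : (n < N)%N -> A (xpsi n) = dpsi_series (xpsi n).
  move=> lt_n_N; apply/eqP; rewrite -subr_eq0; apply/eqP.
  apply: (commute_dpsi_xpsi_eq0 (commute_dpsi_sub A_comm dpsi_series_comm)) => k le_k_n.
  by rewrite coefB coef0_dpsi_series ?subrr // (leq_ltn_trans le_k_n).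
transitivity (dpsi_series (\sum_(i < size q) (q`_i / psi i) *: xpsi i)).
  rewrite {1}[q]poly_xpsi_expand (islinear_sum A_comm.1).
  rewrite (islinear_sum dpsi_series_comm.1); apply: eq_bigr => i _.
  rewrite (islinearZ A_comm.1) (islinearZ dpsi_series_comm.1).
  by rewrite A_xpsi // (leq_trans (ltn_ord i)).
by rewrite -poly_xpsi_expand.
Qed.
End Expansion.

Lemma commute_dpsiC A B q : commute_dpsi A -> commute_dpsi B -> A (B q) = B (A q).
Proof.
move=> A_comm [B_lin BD]; set N := maxn (size q) (size (B q)).
rewrite (commute_dpsi_expand A_comm (leq_maxr _ _ : (size (B q) <= N)%N)).
rewrite (commute_dpsi_expand A_comm (leq_maxl _ _ : (size q <= N)%N)).
rewrite (islinear_sum B_lin); apply: eq_bigr => j _.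
by rewrite (islinearZ B_lin) (iter_commute BD).
Qed.

Definition pincherle A q := A (X q) - X (A q).

Lemma commute_dpsi_pincherle A : commute_dpsi A -> commute_dpsi (pincherle A).
Proof.
move=> [A_lin AD]; split=> [a p q|p]; rewrite /pincherle.
  by rewrite xhat_is_linear !A_lin xhat_is_linear scalerBr opprD addrACA.
have xhat_dpsi (r : {poly F}) : X (D r) = D (X r) - r by rewrite dpsi_xhat addrC addKr.
by rewrite [RHS]linearB /= xhat_dpsi (islinearB A_lin) !AD xhat_dpsi opprB addrA subrK.
Qed.

Lemma basic_seq_unique (Q : {poly F} -> {poly F}) (p w : nat -> {poly F}) :
  islinear Q -> (forall d, Q d = 0 -> d = (d`_0)%:P) ->
  basic_seq psi Q p -> w 0%N = 1 -> (forall n, (0 < n)%N -> (w n)`_0 = 0) ->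
  (forall n, Q (w n.+1) = nq psi n.+1 *: w n) -> forall n, p n = w n.
Proof.
move=> Q_lin Q_ker [_ p0 p_root _ pQ] w0 w_coef0 wQ.
elim=> [|n IH]; first by rewrite p0 w0.
have Qd : Q (p n.+1 - w n.+1) = 0 by rewrite (islinearB Q_lin) pQ wQ IH subrr.
apply/eqP; rewrite -subr_eq0; apply/eqP; rewrite (Q_ker _ Qd) coefB.
by rewrite -horner_coef0 p_root // w_coef0 // subrr.
Qed.

Section Transfer.
Variables S Sinv : {poly F} -> {poly F}.
Hypotheses (S_comm : commute_dpsi S) (SK : cancel S Sinv) (SinvK : cancel Sinv S).

Let Sinv_comm := commute_dpsi_inv S_comm SK SinvK.
Let S'_comm := commute_dpsi_pincherle S_comm.
Local Notation S' := (pincherle S).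

Lemma dpsiS_eq0 d : D (S d) = 0 -> d = (d`_0)%:P.
Proof.
move=> DSd0; apply: dpsi_eq0.
by rewrite -[d]SK -Sinv_comm.2 DSd0 (islinear0 Sinv_comm.1).
Qed.

Lemma xhat_Sinv z : X (Sinv z) = Sinv (X z) + S' (Sinv (Sinv z)).
Proof.
rewrite -(commute_dpsiC _ Sinv_comm S'_comm) -(islinearD Sinv_comm.1).
by rewrite /pincherle SinvK addrC subrK SK.
Qed.

Lemma xhat_iter_Sinv n y :
  X (iter n Sinv y) = iter n Sinv (X y) + n%:R *: S' (iter n.+1 Sinv y).
Proof.
elim: n y => [|n IH] y; first by rewrite scale0r addr0.
rewrite iterS xhat_Sinv IH (islinearD Sinv_comm.1) (islinearZ Sinv_comm.1).
by rewrite (commute_dpsiC _ Sinv_comm S'_comm) -addrA -natr1 scalerDl scale1r.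
Qed.

Let V q := q + S' (Sinv (D q)).
Let w n := iter n Sinv (V 'X^n).

Let V_comm : commute_dpsi V.
Proof.
apply: (commute_dpsi_add commute_dpsi_id).
exact: commute_dpsi_comp S'_comm (commute_dpsi_comp Sinv_comm commute_dpsi_dpsi).
Qed.

Let w0 : w 0 = 1.
Proof.
by rewrite /w /V /= expr0 -polyC1 dpsiC (islinear0 Sinv_comm.1) (islinear0 S'_comm.1) addr0.
Qed.

Let dpsiS_w n : D (S (w n.+1)) = nq psi n.+1 *: w n.
Proof.
rewrite /w iterS SinvK -(commute_dpsi_iter n Sinv_comm).2 -V_comm.2 dpsiXn.
by rewrite (islinearZ V_comm.1) (islinearZ (commute_dpsi_iter n Sinv_comm).1).
Qed.

Let w_xhat n : (0 < n)%N -> w n = X (iter n Sinv (Xi 'X^n)).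
Proof.
case: n => [//|n] _; rewrite xhat_iter_Sinv xhatinvK ?coefXn //.
rewrite /w /V (islinearD (commute_dpsi_iter n.+1 Sinv_comm).1); congr (_ + _).
have C_comm := commute_dpsi_comp S'_comm (commute_dpsi_iter n.+2 Sinv_comm).
rewrite (commute_dpsiC _ (commute_dpsi_iter n.+1 Sinv_comm) S'_comm) -iterSr.
rewrite dpsiXn xhatinvXn (islinearZ C_comm.1) (islinearZ C_comm.1) scalerA.
by rewrite mulrC divfK ?natf_neq0.
Qed.

Lemma basic_seq_transfer (p : nat -> {poly F}) : basic_seq psi (fun q => D (S q)) p ->
  forall n, (0 < n)%N -> p n = X (iter n Sinv (Xi 'X^n)).
Proof.
move=> p_basic n n_gt0; rewrite -w_xhat //.
apply: (basic_seq_unique _ dpsiS_eq0 p_basic w0 _ dpsiS_w) => [|m m_gt0].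
  exact: (commute_dpsi_comp commute_dpsi_dpsi S_comm).1.
by rewrite w_xhat // coef0_xhat.
Qed.

End Transfer.
End PsiOperators.

Theorem mainTheorem12 (F : fieldType) (charF : [pchar F] =i pred0)
  (psi : nat -> F) (psi0 : psi 0%N = 1) (psi_nz : forall n, psi n != 0)
  (S Sinv P0 P0inv : {poly F} -> {poly F})
  (S_Sig : in_Sigma psi S) (P0_Sig : in_Sigma psi P0)
  (S_inv1 : forall q, S (Sinv q) = q) (S_inv2 : forall q, Sinv (S q) = q)
  (P0_inv1 : forall q, P0 (P0inv q) = q) (P0_inv2 : forall q, P0inv (P0 q) = q)
  (Q_delta : delta_op psi (fun q => dpsi psi (S q)))
  (R_delta : delta_op psi (fun q => dpsi psi (P0 q)))
  (p r : nat -> {poly F})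
  (p_basic : basic_seq psi (fun q => dpsi psi (S q)) p)
  (r_basic : basic_seq psi (fun q => dpsi psi (P0 q)) r) :
  forall n : nat, (0 < n)%N ->
    p n = xhat psi (iter n (fun q => P0 (Sinv q)) (xhatinv psi (r n))).
Proof.
move=> n n_gt0.
have S_comm := Sigma_commute_dpsi charF psi_nz S_Sig.
have P0_comm := Sigma_commute_dpsi charF psi_nz P0_Sig.
have Sinv_comm := commute_dpsi_inv S_comm S_inv2 S_inv1.
have P0inv_comm := commute_dpsi_inv P0_comm P0_inv2 P0_inv1.
rewrite (basic_seq_transfer charF psi0 psi_nz S_comm S_inv2 S_inv1 p_basic n_gt0).
rewrite (basic_seq_transfer charF psi0 psi_nz P0_comm P0_inv2 P0_inv1 r_basic n_gt0).
rewrite (xhatK charF psi_nz) (iter_comp_cancel P0_inv1) // => q.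
exact: commute_dpsiC P0inv_comm Sinv_comm.
Qed.
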